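(* Let $n\ge1$, $\mathcal{K}=\{\texttt{a},\texttt{b}\}$, $\epsilon\ge0$ and $p=e^\epsilon/(1+e^\epsilon)$. For the uniform prior $\pi$ on $\mathcal{K}^n$ and the single-target gain function $g_{\rm T}$, $$V_{\rm T}[\pi\triangleright\mathbf{N}\mathbf{S}]=\frac12+\frac{1}{2^n}(2p-1)\binom{n-1}{\lfloor\frac{n-1}{2}\rfloor}.$$
   Context: A dataset is $x=(x_0,\dots,x_{n-1})\in\mathcal{K}^n$; its histogram $h(x)$ is the map $\kappa\mapsto|\{i:x_i=\kappa\}|$; $\#z$ is the number of datasets with histogram $z$. Full $k$-RR channel (with $k=2$) $\mathbf{N}:\mathcal{K}^n\to\mathcal{K}^n$: $\mathbf{N}_{x,y}=\prod_{i}q(y_i\mid x_i)$, $q(b\mid a)=p$ if $b=a$, $1-p$ otherwise. Shuffle channel $\mathbf{S}:\mathcal{K}^n\to\mathcal{K}^n$: $\mathbf{S}_{x,y}=1/\#h(x)$ if $h(y)=h(x)$, else $0$. $\mathbf{N}\mathbf{S}$ is the matrix product. Uniform prior $\pi_x=1/2^n$. Single-target gain function: $\mathcal{W}=\mathcal{K}$, $g_{\rm T}(w,x)=1$ if $x_0=w$, else $0$. Posterior vulnerability: $V_{\rm T}[\pi\triangleright\mathbf{C}]=\sum_{y}\max_{w}\sum_{x}\pi_x\mathbf{C}_{x,y}g_{\rm T}(w,x)$. *)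

From mathcomp Require Import all_boot all_order all_algebra.
From mathcomp Require Import all_classical all_reals all_analysis.
Set Implicit Arguments.
Unset Strict Implicit. Unset Printing Implicit Defensive.
Import Order.TTheory GRing.Theory Num.Theory.
Local Open Scope ring_scope.

(* Alphabet K = {a, b} is encoded as bool (a := true, b := false).
   A dataset of length n is a finite function 'I_n -> bool. *)
Definition dataset (n : nat) := {ffun 'I_n -> bool}.

Definition hist n (x : dataset n) : {ffun bool -> nat} :=
  [ffun k => #|[set i | x i == k]|].

Definition numhist (n : nat) (z : {ffun bool -> nat}) : nat :=
  #|[set x : dataset n | hist x == z]|.
Arguments numhist : clear implicits.

Definition Nch (R : realType) n (p : R) (x y : dataset n) : R :=
  \prod_(i < n) (if y i == x i then p else 1 - p).

Definition Sch (R : realType) n (x y : dataset n) : R :=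
  if hist y == hist x then ((numhist n (hist x))%:R)^-1 else 0.

Definition NSch (R : realType) n (p : R) (x y : dataset n) : R :=
  \sum_(z : dataset n) Nch p x z * Sch R z y.

Definition unif_prior (R : realType) n (x : dataset n) : R := ((2 ^ n)%:R)^-1.

Definition gT n (hn : (0 < n)%N) (w : bool) (x : dataset n) (R : realType) : R :=
  if x (Ordinal hn) == w then 1 else 0.

Definition V_T (R : realType) n (hn : (0 < n)%N) (pi : dataset n -> R)
    (C : dataset n -> dataset n -> R) : R :=
  \sum_(y : dataset n)
     Num.max (\sum_(x : dataset n) pi x * C x y * gT hn true x R)
             (\sum_(x : dataset n) pi x * C x y * gT hn false x R).

(* Summing out the inputs of the randomized-response channel, the posterior of a
   guess w for x_0 given the shuffled output y depends only on the weight k of y: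
   it is proportional to c_k(w) p + c_k(~~ w) (1 - p), where c_k(b) counts the
   datasets of weight k whose first entry is b, so that c_k(true) = C(n-1, k-1)
   and c_k(false) = C(n-1, k).  Maximising over w and summing over y leaves 1/2
   plus (2p - 1)/2^(n+1) times the total variation of the unimodal sequence
   k |-> C(n-1, k-1), which is twice its peak C(n-1, (n-1)/2). *)

From mathcomp Require Import all_boot all_order all_algebra.
From mathcomp Require Import all_classical all_reals all_analysis.
From mathcomp Require Import zify ring lra.
Import Order.TTheory GRing.Theory Num.Theory.
Set Implicit Arguments.
Unset Strict Implicit.
Unset Printing Implicit Defensive.
Local Open Scope ring_scope.

Definition weight n (x : dataset n) : nat := #|[set i | x i]|.

Definition count_weight_at n (i : 'I_n) (b : bool) (k : nat) : nat :=
  #|[set z : dataset n | (weight z == k) && (z i == b)]|.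

Lemma weightE n (x : dataset n) : weight x = (\sum_i (x i : nat))%N.
Proof.
by rewrite /weight -sum1_card big_mkcond; apply: eq_bigr => i _; rewrite inE; case: (x i).
Qed.

Lemma weight_le n (x : dataset n) : (weight x <= n)%N.
Proof. by rewrite -[n in (_ <= n)%N]card_ord max_card. Qed.

Lemma hist_true n (x : dataset n) : hist x true = weight x.
Proof. by rewrite ffunE; apply: eq_card => i; rewrite !inE eqb_id. Qed.

Lemma hist_false n (x : dataset n) : hist x false = (n - weight x)%N.
Proof.
rewrite ffunE cardsCs card_ord; congr (_ - _)%N; apply: eq_card => i.
by rewrite !inE; case: (x i).
Qed.

Lemma eq_hist n (x y : dataset n) : (hist x == hist y) = (weight x == weight y).
Proof.
apply/eqP/eqP => [|exy]; first by rewrite -!hist_true => ->.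
by apply/ffunP => -[]; rewrite ?hist_true ?hist_false exy.
Qed.

Lemma card_weight n k : #|[set x : dataset n | weight x == k]| = 'C(n, k).
Proof.
rewrite -[n in RHS]card_ord -card_draws.
rewrite -(on_card_preimset (f := fun x : dataset n => [set i | x i])).
  by apply: eq_card => x; rewrite !inE.
apply: onW_bij; exists (fun A : {set 'I_n} => [ffun i => i \in A]) => [x|A].
  by apply/ffunP => i; rewrite ffunE inE.
by apply/setP => i; rewrite inE ffunE.
Qed.

Lemma numhist_hist n (y : dataset n) : numhist n (hist y) = 'C(n, weight y).
Proof. by rewrite -card_weight; apply: eq_card => x; rewrite !inE eq_hist. Qed.

Lemma Sch_weight (R : realType) n (z y : dataset n) :
  Sch R z y = (weight z == weight y)%:R / ('C(n, weight y))%:R.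
Proof.
rewrite /Sch eq_hist eq_sym numhist_hist.
by have [->|_] := eqVneq (weight z) (weight y); rewrite ?mul1r ?mul0r.
Qed.

Lemma count_weight_at_split n (i : 'I_n) k :
  (count_weight_at i true k + count_weight_at i false k)%N = 'C(n, k).
Proof.
rewrite -card_weight -(cardsID [set z : dataset n | z i]).
by congr addn; apply: eq_card => z; rewrite !inE; case: (z i); rewrite ?andbT ?andbF.
Qed.

Section FirstCoordinate.

Variable m : nat.

Definition fcons (b : bool) (t : dataset m) : dataset m.+1 :=
  [ffun i => if unlift ord0 i is Some j then t j else b].

Lemma fcons0 b t : fcons b t ord0 = b.
Proof. by rewrite ffunE unlift_none. Qed.

Lemma fconsS b t j : fcons b t (lift ord0 j) = t j.
Proof. by rewrite ffunE liftK. Qed.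

Lemma fcons_inj b : injective (fcons b).
Proof. by move=> t t' e; apply/ffunP => j; rewrite -!(fconsS b) e. Qed.

Lemma fcons_tail (z : dataset m.+1) : fcons (z ord0) [ffun j => z (lift ord0 j)] = z.
Proof. by apply/ffunP => i; rewrite ffunE; case: unliftP => [j ->|->]; rewrite ?ffunE. Qed.

Lemma weight_fcons b t : weight (fcons b t) = (b + weight t)%N.
Proof.
rewrite !weightE big_ord_recl fcons0; congr (_ + _)%N.
by apply: eq_bigr => j _; rewrite fconsS.
Qed.

Lemma count_weight_at0 b k :
  count_weight_at (ord0 : 'I_m.+1) b k = #|[set t : dataset m | (b + weight t)%N == k]|.
Proof.
rewrite -(card_imset _ (@fcons_inj b)); apply: eq_card => z; rewrite !inE.
apply/andP/imsetP => [[/eqP wz /eqP z0]|[t + ->]].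
  exists [ffun j => z (lift ord0 j)]; last by rewrite -z0 fcons_tail.
  by rewrite inE -z0 -weight_fcons fcons_tail wz.
by rewrite inE weight_fcons fcons0 => /eqP ->.
Qed.

Lemma count_weight_at0_false k : count_weight_at (ord0 : 'I_m.+1) false k = 'C(m, k).
Proof. by rewrite count_weight_at0 -card_weight. Qed.

Lemma count_weight_at0_true k : count_weight_at (ord0 : 'I_m.+1) true k.+1 = 'C(m, k).
Proof. by rewrite count_weight_at0 -card_weight. Qed.

Lemma count_weight_at0_true0 : count_weight_at (ord0 : 'I_m.+1) true 0 = 0%N.
Proof. by rewrite count_weight_at0; apply: eq_card0 => t; rewrite inE. Qed.

End FirstCoordinate.

Lemma sum_Nch_at (R : realType) n (p : R) (i : 'I_n) (z : dataset n) (w : bool) :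
  \sum_x Nch p x z * (if x i == w then 1 else 0) = if z i == w then p else 1 - p.
Proof.
pose G (j : 'I_n) (b : bool) : R :=
  (if z j == b then p else 1 - p) * (if j == i then (b == w)%:R else 1).
transitivity (\sum_(x : dataset n) \prod_j G j (x j)).
  apply: eq_bigr => x _; rewrite /Nch /G big_split /=; congr (_ * _).
  rewrite (bigD1 i) //= eqxx big1 => [|j /negbTE -> //].
  by case: (x i == w); rewrite mulr1.
transitivity (\prod_j \sum_b G j b); first exact: (esym (@bigA_distr_bigA R 0 1 *%R +%R _ _ G)).
rewrite (bigD1 i) //= [X in _ * X]big1 => [|j /negbTE ji].
  rewrite mulr1 big_bool /G eqxx; clear G.
  by case: w; case: (z i); rewrite /= ?mulr1 ?mulr0 ?addr0 ?add0r.
by rewrite big_bool /G ji !mulr1; case: (z j); rewrite /= ?subrKC ?subrK.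
Qed.

Lemma sum_weight_at (R : ringType) n (i : 'I_n) k (w : bool) (a b : R) :
  \sum_(z : dataset n) (weight z == k)%:R * (if z i == w then a else b) =
  (count_weight_at i w k)%:R * a + (count_weight_at i (~~ w) k)%:R * b.
Proof.
rewrite /count_weight_at -!sum1_card !natr_sum !big_distrl /=.
rewrite [X in _ = X + _]big_mkcond [X in _ = _ + X]big_mkcond -big_split /=.
apply: eq_bigr => z _; rewrite !inE.
by case: (weight z == k); case: w; case: (z i); rewrite /= ?mul1r ?mul0r ?addr0 ?add0r.
Qed.

Lemma posterior_NSch (R : realType) n (p : R) (i : 'I_n) (y : dataset n) (w : bool) :
  \sum_x unif_prior R x * NSch p x y * (if x i == w then 1 else 0) =
  ((2 ^ n)%:R)^-1 / ('C(n, weight y))%:R *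
  ((count_weight_at i w (weight y))%:R * p +
   (count_weight_at i (~~ w) (weight y))%:R * (1 - p)).
Proof.
set u : R := ((2 ^ n)%:R)^-1.
transitivity (u * \sum_z Sch R z y * \sum_x Nch p x z * (if x i == w then 1 else 0)).
  rewrite /unif_prior /NSch -/u; under eq_bigr do rewrite big_distrr big_distrl /=.
  rewrite exchange_big big_distrr /=; apply: eq_bigr => z _.
  by rewrite !big_distrr /=; apply: eq_bigr => x _; ring.
under eq_bigr do rewrite sum_Nch_at Sch_weight mulrAC.
by rewrite -big_distrl sum_weight_at /= mulrA mulrAC.
Qed.

Lemma max_mixture (R : realFieldType) (p c d : R) : 0 <= 2 * p - 1 ->
  Num.max (c * p + d * (1 - p)) (d * p + c * (1 - p)) =
  (c + d + (2 * p - 1) * `|c - d|) / 2.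
Proof.
move=> hp; have [cd|dc] := leP c d.
  have e : `|c - d| = d - c by rewrite distrC ger0_norm // subr_ge0.
  rewrite e max_r; first by field.
  have : 0 <= (2 * p - 1) * (d - c) by rewrite mulr_ge0 // subr_ge0.
  lra.
have e : `|c - d| = c - d by rewrite ger0_norm // subr_ge0 ltW.
rewrite e max_l; first by field.
have : 0 <= (2 * p - 1) * (c - d) by rewrite mulr_ge0 // subr_ge0 ltW.
lra.
Qed.

Lemma max_posterior_NSch (R : realType) n (p : R) (i : 'I_n) (y : dataset n) :
  0 <= 2 * p - 1 ->
  let post w := \sum_x unif_prior R x * NSch p x y * (if x i == w then 1 else 0) in
  let c b := (count_weight_at i b (weight y))%:R : R in
  Num.max (post true) (post false) =
  ((2 ^ n)%:R)^-1 / 2 * (('C(n, weight y))%:R + (2 * p - 1) * `|c true - c false|) /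
  ('C(n, weight y))%:R.
Proof.
move=> hp post c; rewrite /post !posterior_NSch /= -maxr_pMr; last first.
  by rewrite mulr_ge0 ?invr_ge0 ?ler0n.
by rewrite max_mixture // -natrD count_weight_at_split /c; ring.
Qed.

Lemma sum_by_weight (R : numFieldType) n (G : nat -> R) :
  \sum_(y : dataset n) G (weight y) / ('C(n, weight y))%:R = \sum_(k < n.+1) G k.
Proof.
rewrite (partition_big (fun y : dataset n => inord (weight y) : 'I_n.+1) xpredT) //=.
apply: eq_bigr => k _.
have Cn0 : ('C(n, k))%:R != 0 :> R by rewrite pnatr_eq0 -lt0n bin_gt0 -ltnS.
rewrite (eq_bigr (fun=> G k / ('C(n, k))%:R)) => [|y /eqP <-]; last first.
  by rewrite inordK // ltnS weight_le.
rewrite (eq_bigl (mem [set y : dataset n | weight y == k])) => [|y]; last first.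
  by rewrite !inE -(inj_eq val_inj) /= inordK // ltnS weight_le.
by rewrite sumr_const card_weight -[RHS](divfK Cn0) mulr_natr.
Qed.

Lemma sum_dist_unimodal (R : realDomainType) (a : nat -> R) (s N : nat) :
  (s <= N)%N ->
  (forall k, (k < s)%N -> a k <= a k.+1) ->
  (forall k, (s <= k < N)%N -> a k.+1 <= a k) ->
  \sum_(0 <= k < N) `|a k.+1 - a k| = 2 * a s - a 0%N - a N.
Proof.
move=> sN up down; rewrite (big_cat_nat (leq0n s) sN) /=.
rewrite (eq_big_nat _ _ (F2 := fun k => a k.+1 - a k)) => [|k /andP[_ ks]]; last first.
  by rewrite ger0_norm // subr_ge0 up.
rewrite [X in _ + X](eq_big_nat _ _ (F2 := fun k => - (a k.+1 - a k))) => [|k kN]; last first.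
  by rewrite ler0_norm // subr_le0 down.
by rewrite sumrN !telescope_sumr //; ring.
Qed.

Lemma leq_binS m k : (k < m./2)%N -> ('C(m, k) <= 'C(m, k.+1))%N.
Proof.
move=> km; rewrite -(leq_pmul2l (ltn0Sn k)) mul_bin_left leq_mul2r.
by apply/orP; right; lia.
Qed.

Lemma geq_binS m k : (m./2 <= k)%N -> ('C(m, k.+1) <= 'C(m, k))%N.
Proof.
move=> km; rewrite -(leq_pmul2l (ltn0Sn k)) mul_bin_left leq_mul2r.
by apply/orP; right; lia.
Qed.

Lemma sum_dist_count_weight_at0 (R : realDomainType) m :
  \sum_(k < m.+2) `|(count_weight_at (ord0 : 'I_m.+1) true k)%:R -
                    (count_weight_at (ord0 : 'I_m.+1) false k)%:R : R| =
  2 * ('C(m, m./2))%:R.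
Proof.
pose a k := (count_weight_at (ord0 : 'I_m.+1) true k)%:R : R.
rewrite (eq_bigr (fun k : 'I_m.+2 => `|a k.+1 - a k|)) => [|k _]; last first.
  by rewrite /a count_weight_at0_true count_weight_at0_false distrC.
rewrite -(big_mkord xpredT (fun k => `|a k.+1 - a k|)).
rewrite (@sum_dist_unimodal _ a m./2.+1) => [||[|k] km|[|k] /andP[km _]] //.
- by rewrite /a !count_weight_at0_true count_weight_at0_true0 (bin_small (ltnSn m)) !subr0.
- lia.
- by rewrite /a count_weight_at0_true count_weight_at0_true0 ler0n.
- by rewrite /a !count_weight_at0_true ler_nat leq_binS.
- by rewrite /a !count_weight_at0_true ler_nat geq_binS.
Qed.

Lemma sum_binomial n : (\sum_(k < n.+1) 'C(n, k))%N = (2 ^ n)%N.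
Proof.
have := expnDn 1 1 n; rewrite add1n => ->.
by apply: eq_bigr => k _; rewrite !exp1n !muln1.
Qed.

Lemma half_le_div1D (R : realFieldType) (e : R) : 1 <= e -> 2^-1 <= e / (1 + e).
Proof.
move=> e1; rewrite -subr_ge0.
have -> : e / (1 + e) - 2^-1 = (e - 1) / (2 * (1 + e)) by field; lra.
by rewrite divr_ge0 //; lra.
Qed.

Theorem mainTheorem12 (R : realType) (n : nat) (hn : (1 <= n)%N) (eps : R)
    (heps : 0 <= eps) :
  let p := expR eps / (1 + expR eps) in
  V_T hn (@unif_prior R n) (NSch p) =
    2^-1 + ((2 ^ n)%:R)^-1 * (2 * p - 1) * ('C(n.-1, (n.-1)./2))%:R.
Proof.
move=> p; case: n hn => // m hn.
have hp : 0 <= 2 * p - 1.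
  have e1 : 1 <= expR eps by have := expR_ge1Dx eps; lra.
  by have := half_le_div1D e1; rewrite -/p; lra.
pose c k b := (count_weight_at (ord0 : 'I_m.+1) b k)%:R : R.
pose G k := ((2 ^ m.+1)%:R)^-1 / 2 *
  (('C(m.+1, k))%:R + (2 * p - 1) * `|c k true - c k false|).
rewrite /V_T /gT (_ : Ordinal hn = ord0); last exact: val_inj.
transitivity (\sum_(y : dataset m.+1) G (weight y) / ('C(m.+1, weight y))%:R).
  by apply: eq_bigr => y _; rewrite max_posterior_NSch.
rewrite sum_by_weight /G -big_distrr big_split /= -big_distrr /=.
rewrite sum_dist_count_weight_at0 -natr_sum sum_binomial.
have h2 : (2 ^ m.+1)%:R != 0 :> R by rewrite pnatr_eq0 expn_eq0.
by field.
Qed.
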